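(* Let $t$ be real with $1\leq t\leq n$. If $S(t)>0$, then $\alpha(G)\leq\lfloor t\rfloor$.
   Context: Let $G$ be a simple graph with vertex set $V=\{1,\dots,n\}$, edge set $E$, adjacency matrix $A$ and stability number $\alpha(G)$ (maximum size of a set of pairwise nonadjacent vertices). Let $e$ be the all-ones vector, $\langle M,N\rangle=\operatorname{trace}(M^TN)$, and $X\geq 0$ mean entrywise nonnegativity. For real $t$ with $1\leq t\leq n$, $Q(t)$ is the semidefinite program $$\min \tfrac12\langle A,X\rangle\ \text{ s.t. } X\succeq 0,\ X\geq 0,\ \operatorname{trace}(X)=t,\ Xe=t\operatorname{diag}(X)$$ over symmetric $n\times n$ matrices $X$, and $S(t)$ denotes its optimal value. *)

From HB Require Import structures.
From mathcomp Require Import all_boot all_order all_algebra.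
From mathcomp Require Import classical_sets reals.
Set Implicit Arguments. Unset Strict Implicit. Unset Printing Implicit Defensive.
Import Order.TTheory GRing.Theory Num.Theory.
Local Open Scope ring_scope.
Local Open Scope classical_set_scope.

Definition simple_graph (n : nat) (adj : rel 'I_n) : Prop :=
  symmetric adj /\ irreflexive adj.

Definition adjmx (R : realType) (n : nat) (adj : rel 'I_n) : 'M[R]_n :=
  \matrix_(i, j) (adj i j)%:R.

Definition stable_set (n : nat) (adj : rel 'I_n) (S : {set 'I_n}) : bool :=
  [forall i in S, forall j in S, ~~ adj i j].

Definition stability_number (n : nat) (adj : rel 'I_n) : nat :=
  \max_(S : {set 'I_n} | stable_set adj S) #|S|.

Definition psd (R : realType) (n : nat) (X : 'M[R]_n) : Prop :=
  X^T = X /\ forall v : 'cV[R]_n, 0 <= (v^T *m X *m v) 0 0.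

Definition frob (R : realType) (n : nat) (M N : 'M[R]_n) : R := \tr (M^T *m N).

Definition diagv (R : realType) (n : nat) (X : 'M[R]_n) : 'cV[R]_n :=
  \col_i X i i.
Definition onesv (R : realType) (n : nat) : 'cV[R]_n := const_mx 1.

Definition Qfeasible (R : realType) (n : nat) (t : R) (X : 'M[R]_n) : Prop :=
  [/\ psd X, (forall i j, 0 <= X i j), \tr X = t &
      X *m onesv R n = t *: diagv X].

Definition Sval (R : realType) (n : nat) (adj : rel 'I_n) (t : R) : R :=
  inf [set (2^-1 * frob (adjmx R adj) X) | X in [set X : 'M[R]_n | Qfeasible t X]].

From HB Require Import structures.
From mathcomp Require Import all_boot all_order all_algebra.
From mathcomp Require Import classical_sets reals.
From mathcomp Require Import ring lra.
Set Implicit Arguments. Unset Strict Implicit. Unset Printing Implicit Defensive.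
Import Order.TTheory GRing.Theory Num.Theory.
Local Open Scope ring_scope.

(* Suppose G has a stable set S with k = #|S| > t.  The matrix X supported on
   S x S, with a + b on the diagonal and b off it, is feasible for Q(t) for a
   suitable choice of a, b >= 0 (this needs 1 <= t < k), and <A, X> = 0 since
   S contains no edge.  Because every feasible X is entrywise nonnegative, the
   objective is nonnegative as well, so S(t) = 0. *)

Lemma stable_set0 (n : nat) (adj : rel 'I_n) : stable_set adj finset.set0.
Proof. by apply/forall_inP => i; rewrite finset.in_set0. Qed.

Lemma stability_number_attained (n : nat) (adj : rel 'I_n) :
  {S : {set 'I_n} | stable_set adj S & #|S| = stability_number adj}.
Proof.
have ne : (0 < #|stable_set adj|)%N.
  by apply/card_gt0P; exists finset.set0; rewrite unfold_in; exact: stable_set0.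
have [S SP eqS] := eq_bigmax_cond (fun S : {set 'I_n} => #|S|) ne.
by exists S; rewrite ?unfold_in in SP.
Qed.

Lemma floor_lt_natr (R : realType) (t : R) (k : nat) :
  (Num.floor t < k%:Z)%R -> t < k%:R.
Proof.
move=> lt_tk; apply: (lt_le_trans (floorD1_gt t)).
by rewrite -[k%:R]/((k%:Z)%:~R) ler_int lezD1.
Qed.

(* The coefficients make tr X = t and X e = t diag(X) hold for #|S| = k. *)
Lemma uniform_weights (R : realType) (t k : R) :
  1 <= t -> t < k ->
  exists a b : R, [/\ 0 <= a, 0 <= b, k * (a + b) = t & a + b * k = t * (a + b)].
Proof.
move=> ht1 htk.
have k0 : k != 0 by rewrite gt_eqF //; lra.
have k10 : k - 1 != 0 by rewrite subr_eq0 gt_eqF //; lra.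
have den_gt0 : 0 < k * (k - 1) by apply: mulr_gt0; lra.
exists (t * (k - t) / (k * (k - 1))), (t * (t - 1) / (k * (k - 1))).
split; first (by apply: divr_ge0 => //; apply: mulr_ge0; lra);
  first (by apply: divr_ge0 => //; apply: mulr_ge0; lra);
  by field; rewrite k0 k10.
Qed.

Section UniformSetMatrix.

Variables (R : realType) (n : nat) (S : {set 'I_n}) (a b : R).

Definition setind (i : 'I_n) : R := (i \in S)%:R.

Definition uniform_setmx : 'M[R]_n :=
  \matrix_(i, j) (setind i * setind j * (a * (i == j)%:R + b)).

Lemma setind_ge0 i : 0 <= setind i.
Proof. exact: ler0n. Qed.

Lemma setind_idem i : setind i * setind i = setind i.
Proof. by rewrite /setind; case: (i \in S); rewrite ?mulr1 ?mulr0. Qed.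

Lemma sum_setind : \sum_i setind i = #|S|%:R.
Proof.
rewrite -sum1_card natr_sum [RHS]big_mkcond /=.
by apply: eq_bigr => i _; rewrite /setind; case: (i \in S).
Qed.

Lemma uniform_setmx_sumr (u : 'I_n -> R) j :
  \sum_i u i * uniform_setmx i j =
  setind j * (a * u j * setind j + b * \sum_i u i * setind i).
Proof.
rewrite (bigD1 j) //= [in RHS](bigD1 j) //= mxE eqxx.
rewrite (eq_bigr (fun i => u i * setind i * (setind j * b))); last first.
  by move=> i /negbTE ij; rewrite mxE ij /= mulr0n mulr0 add0r; ring.
by rewrite -mulr_suml /= mulr1n; ring.
Qed.

Lemma uniform_setmx_sym : uniform_setmx^T = uniform_setmx.
Proof. by apply/matrixP => i j; rewrite !mxE eq_sym; ring. Qed.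

Hypotheses (a_ge0 : 0 <= a) (b_ge0 : 0 <= b).

Lemma uniform_setmx_ge0 i j : 0 <= uniform_setmx i j.
Proof.
rewrite mxE; apply: mulr_ge0; first by apply: mulr_ge0; apply: setind_ge0.
by apply: addr_ge0 => //; apply: mulr_ge0.
Qed.

(* With y_j = v_j [j \in S], the quadratic form is a |y|^2 + b (sum_j y_j)^2. *)
Lemma uniform_setmx_psd : psd uniform_setmx.
Proof.
split=> [|v]; first exact: uniform_setmx_sym.
pose s := \sum_i v i 0 * setind i.
have -> : (v^T *m uniform_setmx *m v) 0 0 =
    \sum_j (a * (v j 0 * setind j) ^+ 2 + b * s * (v j 0 * setind j)).
  rewrite mxE; apply: eq_bigr => j _; rewrite mxE.
  rewrite (eq_bigr (fun i => v i 0 * uniform_setmx i j)); last by move=> i _; rewrite mxE.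
  by rewrite uniform_setmx_sumr -/s; ring.
rewrite big_split /= -!mulr_sumr -/s -mulrA.
apply: addr_ge0; apply: mulr_ge0 => //; last by rewrite -expr2 sqr_ge0.
by apply: sumr_ge0 => j _; apply: sqr_ge0.
Qed.

Lemma uniform_setmx_trace : \tr uniform_setmx = #|S|%:R * (a + b).
Proof.
rewrite /mxtrace (eq_bigr (fun i => setind i * (a + b))); last first.
  by move=> i _; rewrite mxE eqxx setind_idem /= mulr1n mulr1.
by rewrite -mulr_suml sum_setind.
Qed.

Lemma uniform_setmx_rowsum (c : R) : a + b * #|S|%:R = c * (a + b) ->
  uniform_setmx *m onesv R n = c *: diagv uniform_setmx.
Proof.
move=> abc; apply/matrixP => i j; rewrite (ord1 j) !mxE.
rewrite (eq_bigr (fun j => 1 * uniform_setmx j i)); last first.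
  by move=> j' _; rewrite !mxE eq_sym; ring.
rewrite uniform_setmx_sumr eqxx /= mulr1n mulr1 setind_idem.
under eq_bigr do rewrite mul1r.
rewrite sum_setind.
transitivity (setind i * (a + b * #|S|%:R)).
  by rewrite !mulrDr mulrCA setind_idem [a * setind i]mulrC.
by rewrite abc; ring.
Qed.

End UniformSetMatrix.

Lemma frob_adjmx_ge0 (R : realType) (n : nat) (adj : rel 'I_n) (X : 'M[R]_n) :
  (forall i j, 0 <= X i j) -> 0 <= frob (adjmx R adj) X.
Proof.
move=> X_ge0; rewrite /frob /mxtrace; apply: sumr_ge0 => i _; rewrite mxE.
by apply: sumr_ge0 => j _; apply: mulr_ge0; rewrite ?mxE ?ler0n.
Qed.

Lemma frob_adjmx_stable (R : realType) (n : nat) (adj : rel 'I_n)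
    (S : {set 'I_n}) (a b : R) :
  stable_set adj S -> frob (adjmx R adj) (uniform_setmx S a b) = 0.
Proof.
move=> /forall_inP stS; rewrite /frob /mxtrace; apply: big1 => i _; rewrite mxE.
apply: big1 => j _; rewrite !mxE /setind.
have [jS|jS] := boolP (j \in S); last by rewrite !mul0r mulr0.
have [iS|iS] := boolP (i \in S); last by rewrite !(mulr0, mul0r).
by move: (stS j jS) => /forall_inP /(_ i iS) /negbTE ->; rewrite mul0r.
Qed.

Lemma Sval_le0 (R : realType) (n : nat) (adj : rel 'I_n) (t : R) (X : 'M[R]_n) :
  Qfeasible t X -> frob (adjmx R adj) X = 0 -> Sval adj t <= 0.
Proof.
move=> feasX frobX0; apply: ge_inf; last by exists X => //; rewrite frobX0 mulr0.
exists 0 => y [Y [_ Y_ge0 _ _] <-].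
by apply: mulr_ge0; [rewrite invr_ge0 ler0n | exact: frob_adjmx_ge0].
Qed.

Theorem mainTheorem14 (R : realType) (n : nat) (adj : rel 'I_n)
  (hG : simple_graph adj) (t : R) (ht1 : 1 <= t) (htn : t <= n%:R) :
  0 < Sval adj t -> ((stability_number adj)%:Z <= Num.floor t)%R.
Proof.
move=> Spos; rewrite leNgt; apply/negP => /floor_lt_natr lt_t_alpha.
have [S stS cardS] := stability_number_attained adj.
rewrite -cardS in lt_t_alpha.
have [a [b [a_ge0 b_ge0 trX rowX]]] := uniform_weights ht1 lt_t_alpha.
have feasX : Qfeasible t (uniform_setmx S a b).
  split; [exact: uniform_setmx_psd | exact: uniform_setmx_ge0 |
          by rewrite uniform_setmx_trace trX | exact: uniform_setmx_rowsum rowX].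
have := Sval_le0 feasX (frob_adjmx_stable a b stS).
by rewrite leNgt Spos.
Qed.
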